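(* Let $\mathcal{J}=(a,b)$ be a finite interval, $m\geq 3$, $Q\in L_1(\mathcal{J};\mathbb{C})$, and let $\widetilde Q=Q+c$ for a constant $c\in\mathbb{C}$. Let $L_{\max}(Q),L_{\min}(Q)$ and $L_{\max}(\widetilde Q),L_{\min}(\widetilde Q)$ be the maximal and minimal quasi-differential operators in $L_2(\mathcal{J};\mathbb{C})$ constructed from $Q$ and from $\widetilde Q$ respectively. Then $L_{\max}(\widetilde Q)=L_{\max}(Q)$ and $L_{\min}(\widetilde Q)=L_{\min}(Q)$ (equal domains and equal actions).
   Context: For $P\in L_1(\mathcal{J};\mathbb{C})$ define quasi-derivatives $D^{[k]}_Py=y^{(k)}$ for $k=0,\dots,m-2$; $D^{[m-1]}_Py=y^{(m-1)}+i^{-m}Py$; $D^{[m]}_Py=(D^{[m-1]}_Py)'-i^{-m}P\,D^{[1]}_Py$. The maximal operator $L_{\max}(P)$ acts by $y\mapsto i^mD^{[m]}_Py$ on the domain $\{y: D^{[k]}_Py\in AC([a,b];\mathbb{C}),\ k=0,\dots,m-1,\ D^{[m]}_Py\in L_2(\mathcal{J};\mathbb{C})\}$. The minimal operator $L_{\min}(P)$ is the restriction of $L_{\max}(P)$ to $\{y\in\operatorname{Dom}L_{\max}(P): D^{[k]}_Py(a)=D^{[k]}_Py(b)=0,\ k=0,\dots,m-1\}$. These regularize the formal expression $i^my^{(m)}+qy$ with $q=P'$ in the distributional sense. *)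

From HB Require Import structures.
From mathcomp Require Import all_boot all_order all_algebra.
From mathcomp Require Import all_classical all_reals all_analysis.
From mathcomp Require Import complex.

Set Implicit Arguments.
Unset Strict Implicit.
Unset Printing Implicit Defensive.
Import Order.TTheory GRing.Theory Num.Theory.
Import numFieldNormedType.Exports.

Local Open Scope classical_set_scope.
Local Open Scope ring_scope.

Section QuasiDiff.
Context {R : realType}.
Local Notation C := (complex R).
Local Notation mu := (@lebesgue_measure R).

Definition iC : C := Complex 0 1.

Definition L1C (a b : R) (f : R -> C) : Prop :=
  mu.-integrable `]a, b[ (EFin \o (fun x => complex.Re (f x))) /\
  mu.-integrable `]a, b[ (EFin \o (fun x => complex.Im (f x))).

Definition L2C (a b : R) (f : R -> C) : Prop :=
  measurable_fun `]a, b[ (fun x => complex.Re (f x)) /\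
  measurable_fun `]a, b[ (fun x => complex.Im (f x)) /\
  mu.-integrable `]a, b[ (EFin \o (fun x => ComplexField.Normc.normc (f x) ^+ 2)).

Definition ACC (a b : R) (f : R -> C) : Prop :=
  forall e : R, 0 < e -> exists2 d : R, 0 < d &
    forall (n : nat) (s t : nat -> R),
      (forall k, (k < n)%N -> a <= s k /\ s k <= t k /\ t k <= b) ->
      (forall k l, (k < n)%N -> (l < n)%N -> k <> l ->
          t k <= s l \/ t l <= s k) ->
      \sum_(k < n) (t k - s k) < d ->
      \sum_(k < n) ComplexField.Normc.normc (f (t k) - f (s k)) < e.

Definition deriv_ae (a b : R) (f g : R -> C) : Prop :=
  {ae mu, forall x, x \in `]a, b[ ->
     is_derive x 1 (fun t => complex.Re (f t)) (complex.Re (g x)) /\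
     is_derive x 1 (fun t => complex.Im (f t)) (complex.Im (g x))}.

Definition eq_ae (a b : R) (f g : R -> C) : Prop :=
  {ae mu, forall x, x \in `]a, b[ -> f x = g x}.

(* [d k] are (representatives of) the quasi-derivatives D^{[k]}_P y,
   k = 0..m, with D^{[k]}_P y absolutely continuous for k = 0..m-1
   and D^{[m]}_P y in L_2.  (m >= 3 is assumed where used, so that
   D^{[1]}_P y = y'.) *)
Definition quasi_derivs (m : nat) (a b : R) (P : R -> C) (d : nat -> R -> C)
  : Prop :=
  (forall k, (k <= m.-1)%N -> ACC a b (d k)) /\
  (forall k, (k.+1 <= m.-2)%N -> deriv_ae a b (d k) (d k.+1)) /\
  (exists g, deriv_ae a b (d m.-2) g /\
     eq_ae a b (d m.-1) (fun x => g x + iC ^- m * P x * d 0%N x)) /\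
  (exists h, deriv_ae a b (d m.-1) h /\
     eq_ae a b (d m) (fun x => h x - iC ^- m * P x * d 1%N x)) /\
  L2C a b (d m).

(* graph of L_max(P): the (class of) y is in the domain and
   L_max(P) y = f  (as elements of L_2, i.e. up to a.e. equality) *)
Definition Lmax_graph (m : nat) (a b : R) (P : R -> C) (y f : R -> C) : Prop :=
  exists d, quasi_derivs m a b P d /\ eq_ae a b y (d 0%N) /\
    eq_ae a b f (fun x => iC ^+ m * d m x).

Definition Lmin_graph (m : nat) (a b : R) (P : R -> C) (y f : R -> C) : Prop :=
  exists d, quasi_derivs m a b P d /\ eq_ae a b y (d 0%N) /\
    eq_ae a b f (fun x => iC ^+ m * d m x) /\
    (forall k, (k < m)%N -> d k a = 0 /\ d k b = 0).

Definition Lmax_dom m a b P (y : R -> C) : Prop := exists f, Lmax_graph m a b P y f.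
Definition Lmin_dom m a b P (y : R -> C) : Prop := exists f, Lmin_graph m a b P y f.

End QuasiDiff.

(* Passing from P to P + c only changes the quasi-derivative of order m-1,
   by the term i^{-m} c y.  Its derivative i^{-m} c y' = i^{-m} c D^{[1]} y is
   exactly the extra term subtracted in D^{[m]}, so D^{[m]} and hence the action
   of the operator are unchanged; the boundary values of the new D^{[m-1]} vanish
   whenever those of D^{[m-1]} and y do.  Applying this to c and -c gives both
   inclusions. *)
From HB Require Import structures.
From mathcomp Require Import all_boot all_order all_algebra.
From mathcomp Require Import all_classical all_reals all_analysis.
From mathcomp Require Import complex.
From mathcomp Require Import ring lra zify.
Import Order.TTheory GRing.Theory Num.Theory.

Set Implicit Arguments.
Unset Strict Implicit.
Unset Printing Implicit Defensive.
Local Open Scope ring_scope.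

Section QuasiDerivativeShift.
Variable R : realType.
Local Notation C := (complex R).
Local Notation normc := (@ComplexField.Normc.normc R).
Local Notation ae_mu := (ae_filter_ringOfSetsType (@lebesgue_measure R)).

Lemma normc_ge0 (z : C) : 0 <= normc z.
Proof. by case: z => u v; exact: sqrtr_ge0. Qed.

Lemma ReD (z w : C) : complex.Re (z + w) = complex.Re z + complex.Re w.
Proof. by case: z w => [? ?] [? ?]. Qed.

Lemma ImD (z w : C) : complex.Im (z + w) = complex.Im z + complex.Im w.
Proof. by case: z w => [? ?] [? ?]. Qed.

Lemma ReM (z w : C) :
  complex.Re (z * w) = complex.Re z * complex.Re w - complex.Im z * complex.Im w.
Proof. by case: z w => [? ?] [? ?]. Qed.

Lemma ImM (z w : C) :
  complex.Im (z * w) = complex.Re z * complex.Im w + complex.Im z * complex.Re w.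
Proof. by case: z w => [? ?] [? ?]. Qed.

Lemma ACCD (a b : R) (f g : R -> C) :
  ACC a b f -> ACC a b g -> ACC a b (fun x => f x + g x).
Proof.
move=> Hf Hg e e0.
have [df df0 Sf] := Hf (e / 2) ltac:(lra).
have [dg dg0 Sg] := Hg (e / 2) ltac:(lra).
exists (Num.min df dg) => [|n s t st disj lt_d]; first by rewrite lt_min df0.
have /(Sf n s t st disj) {}Sf : \sum_(k < n) (t k - s k) < df.
  by apply: lt_le_trans lt_d _; rewrite ge_min lexx.
have /(Sg n s t st disj) {}Sg : \sum_(k < n) (t k - s k) < dg.
  by apply: lt_le_trans lt_d _; rewrite ge_min lexx orbT.
suff : \sum_(k < n) normc (f (t k) + g (t k) - (f (s k) + g (s k)))
    <= \sum_(k < n) normc (f (t k) - f (s k))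
       + \sum_(k < n) normc (g (t k) - g (s k)) by lra.
rewrite -big_split /=; apply: ler_sum => k _.
have -> : f (t k) + g (t k) - (f (s k) + g (s k))
        = (f (t k) - f (s k)) + (g (t k) - g (s k)) by ring.
exact: le_normcD.
Qed.

Lemma ACCZ (a b : R) (z : C) (f : R -> C) :
  ACC a b f -> ACC a b (fun x => z * f x).
Proof.
move=> Hf e e0.
pose K := normc z + 1.
have z0 := normc_ge0 z.
have K0 : 0 < K by rewrite /K; lra.
have [d d0 Sf] := Hf (e / K) (divr_gt0 e0 K0).
exists d => // n s t st disj lt_d.
have {}Sf := Sf n s t st disj lt_d.
have -> : \sum_(k < n) normc (z * f (t k) - z * f (s k))
        = normc z * \sum_(k < n) normc (f (t k) - f (s k)).
  rewrite mulr_sumr; apply: eq_bigr => k _.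
  by rewrite -ComplexField.Normc.normcM mulrBr.
have eK : K * (e / K) = e by field; lra.
apply: le_lt_trans (ler_wpM2l z0 (ltW Sf)) _.
by rewrite -[ltRHS]eK ltr_pM2r ?divr_gt0 // /K; lra.
Qed.

Lemma deriv_aeD (a b : R) (f f' g g' : R -> C) :
  deriv_ae a b f f' -> deriv_ae a b g g' ->
  deriv_ae a b (fun x => f x + g x) (fun x => f' x + g' x).
Proof.
apply: (filterS2 ae_mu) => x Hf Hg xI.
have [Ref Imf] := Hf xI; have [Reg Img] := Hg xI.
rewrite ReD ImD; split.
  under [X in is_derive _ _ X _]funext => t do rewrite ReD.
  exact: is_deriveD Ref Reg.
under [X in is_derive _ _ X _]funext => t do rewrite ImD.
exact: is_deriveD Imf Img.
Qed.

Lemma deriv_aeZ (a b : R) (z : C) (f f' : R -> C) :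
  deriv_ae a b f f' -> deriv_ae a b (fun x => z * f x) (fun x => z * f' x).
Proof.
apply: (@filterS _ _ ae_mu) => x Hf xI; have [Ref Imf] := Hf xI.
rewrite ReM ImM; split.
  under [X in is_derive _ _ X _]funext => t do rewrite ReM.
  exact: is_deriveB (is_deriveZ _ Ref) (is_deriveZ _ Imf).
under [X in is_derive _ _ X _]funext => t do rewrite ImM.
exact: is_deriveD (is_deriveZ _ Imf) (is_deriveZ _ Ref).
Qed.

Definition shift_quasi_derivs (m : nat) (z : C) (d : nat -> R -> C) :
  nat -> R -> C :=
  fun k => if k == m.-1 then (fun x => d m.-1 x + z * d 0%N x) else d k.

Lemma shift_quasi_derivs_pred m z d :
  shift_quasi_derivs m z d m.-1 = (fun x => d m.-1 x + z * d 0%N x).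
Proof. by rewrite /shift_quasi_derivs eqxx. Qed.

Lemma shift_quasi_derivs_neq m z d k :
  k != m.-1 -> shift_quasi_derivs m z d k = d k.
Proof. by rewrite /shift_quasi_derivs => /negbTE ->. Qed.

Lemma quasi_derivs_shift (m : nat) (a b : R) (P : R -> C) (c : C) d :
  (3 <= m)%N -> quasi_derivs m a b P d ->
  quasi_derivs m a b (fun x => P x + c) (shift_quasi_derivs m (iC ^- m * c) d).
Proof.
move=> m3 [ac [der [[g [dg Eg]] [[h [dh Eh]] L2]]]].
rewrite /quasi_derivs shift_quasi_derivs_pred.
rewrite !shift_quasi_derivs_neq; try by apply/eqP; lia.
split; [|split; [|split; [|split]]] => //.
- move=> k km; have [->|kn] := eqVneq k m.-1.
    by rewrite shift_quasi_derivs_pred; apply: ACCD; [|apply: ACCZ]; apply: ac; lia.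
  by rewrite shift_quasi_derivs_neq //; exact: ac.
- move=> k km; rewrite !shift_quasi_derivs_neq; try by apply/eqP; lia.
  exact: der.
- exists g; split => //; move: Eg; apply: (@filterS _ _ ae_mu) => x Ex xI.
  by rewrite Ex //; ring.
- exists (fun x => h x + iC ^- m * c * d 1%N x); split.
    by apply: deriv_aeD => //; apply: deriv_aeZ; apply: der; lia.
  by move: Eh; apply: (@filterS _ _ ae_mu) => x Ex xI; rewrite Ex //; ring.
Qed.

Lemma Lmax_graph_shift (m : nat) (a b : R) (P : R -> C) (c : C) y f :
  (3 <= m)%N ->
  Lmax_graph m a b P y f -> Lmax_graph m a b (fun x => P x + c) y f.
Proof.
move=> m3 [d [qd [Ey Ef]]]; exists (shift_quasi_derivs m (iC ^- m * c) d).
rewrite !shift_quasi_derivs_neq; try by apply/eqP; lia.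
by split=> //; exact: quasi_derivs_shift.
Qed.

Lemma Lmin_graph_shift (m : nat) (a b : R) (P : R -> C) (c : C) y f :
  (3 <= m)%N ->
  Lmin_graph m a b P y f -> Lmin_graph m a b (fun x => P x + c) y f.
Proof.
move=> m3 [d [qd [Ey [Ef bd]]]]; exists (shift_quasi_derivs m (iC ^- m * c) d).
rewrite !shift_quasi_derivs_neq; try by apply/eqP; lia.
split; first exact: quasi_derivs_shift.
split=> //; split=> // k km; have [->|kn] := eqVneq k m.-1.
  rewrite shift_quasi_derivs_pred.
  have [-> ->] := bd m.-1 ltac:(lia); have [-> ->] := bd 0%N ltac:(lia).
  by rewrite mulr0 addr0.
by rewrite shift_quasi_derivs_neq //; exact: bd.
Qed.

Lemma addrK_fun (P : R -> C) (c : C) : (fun x => P x + c + - c) = P.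
Proof. by apply: funext => x; rewrite addrK. Qed.

Lemma Lmax_graph_shiftE (m : nat) (a b : R) (P : R -> C) (c : C) y f :
  (3 <= m)%N ->
  Lmax_graph m a b (fun x => P x + c) y f <-> Lmax_graph m a b P y f.
Proof.
move=> m3; split; last exact: Lmax_graph_shift.
by move=> /(Lmax_graph_shift (- c) m3); rewrite addrK_fun.
Qed.

Lemma Lmin_graph_shiftE (m : nat) (a b : R) (P : R -> C) (c : C) y f :
  (3 <= m)%N ->
  Lmin_graph m a b (fun x => P x + c) y f <-> Lmin_graph m a b P y f.
Proof.
move=> m3; split; last exact: Lmin_graph_shift.
by move=> /(Lmin_graph_shift (- c) m3); rewrite addrK_fun.
Qed.

End QuasiDerivativeShift.

Theorem lemma2 (R : realType) (a b : R) (m : nat) (Q : R -> complex R)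
    (c : complex R) :
  a < b -> (3 <= m)%N -> L1C a b Q ->
  let Qt := fun x => Q x + c in
  ((forall y, Lmax_dom m a b Qt y <-> Lmax_dom m a b Q y) /\
   (forall y f, Lmax_graph m a b Qt y f <-> Lmax_graph m a b Q y f)) /\
  ((forall y, Lmin_dom m a b Qt y <-> Lmin_dom m a b Q y) /\
   (forall y f, Lmin_graph m a b Qt y f <-> Lmin_graph m a b Q y f)).
Proof.
move=> _ m3 _ Qt.
have Gmax y f := Lmax_graph_shiftE a b Q c y f m3.
have Gmin y f := Lmin_graph_shiftE a b Q c y f m3.
split; split=> // y; split=> -[f].
- by move=> /Gmax; exists f.
- by move=> /Gmax; exists f.
- by move=> /Gmin; exists f.
- by move=> /Gmin; exists f.
Qed.
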